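(* Let $R$ be a commutative Noetherian ring with unity and let $x,y$ be nonzero zero divisors of $R$. If $0\neq\operatorname{ann}(x)\subsetneq\operatorname{ann}(y)$, then $\deg[x]\le\deg[y]$ in $\Gamma_E(R)$.
   Context: For $x,y\in R$ write $x\sim y$ iff $\operatorname{ann}(x)=\operatorname{ann}(y)$; $[x]$ denotes the equivalence class of $x$. Let $Z^*(R)$ be the set of nonzero zero divisors of $R$. The graph $\Gamma_E(R)$ is the simple graph whose vertices are the classes $[x]$ with $x\in Z^*(R)$, two distinct vertices $[x],[y]$ being adjacent iff $xy=0$. The degree $\deg[x]$ of a vertex is the number (possibly infinite) of vertices adjacent to it. *)

From HB Require Import structures.
From mathcomp Require Import all_boot all_algebra.
From mathcomp Require Import boolp classical_sets functions cardinality.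
Set Implicit Arguments. Unset Strict Implicit. Unset Printing Implicit Defensive.
Import GRing.Theory.
Local Open Scope ring_scope.
Local Open Scope classical_set_scope.

Section ZeroDivisorGraph.
Variable R : comNzRingType.

Definition is_ideal (I : set R) : Prop :=
  I 0 /\ (forall a b, I a -> I b -> I (a + b)) /\ (forall r a, I a -> I (r * a)).

Definition noetherian : Prop :=
  forall I : nat -> set R, (forall n, is_ideal (I n)) ->
    (forall n, I n `<=` I n.+1) ->
    exists N, forall n, (N <= n)%N -> I n = I N.

Definition ann (x : R) : set R := [set r | r * x = 0].

Definition Zstar : set R := [set x | x != 0 /\ exists y, y != 0 /\ x * y = 0].

Definition eclass (x : R) : set R := [set y | ann y = ann x].

(* vertices of Gamma_E(R) adjacent to [x]: the set of classes [z], z in Z*(R),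
   distinct from [x], with z x = 0.  deg[x] is the cardinality of this set. *)
Definition nbhdE (x : R) : set (set R) :=
  [set C | exists z, Zstar z /\ C = eclass z /\ eclass z <> eclass x /\ z * x = 0].

End ZeroDivisorGraph.

(* The neighbours of [x] and of [y] almost coincide: every neighbour [z] of [x]
   satisfies z y = 0 because ann x is contained in ann y, so it is a neighbour
   of [y] unless [z] = [y].  In that exceptional case x y = 0, and [x], which
   is not a neighbour of itself, becomes a neighbour of [y].  Swapping [y] for
   [x] therefore embeds the neighbourhood of [x] into that of [y]. *)

From mathcomp Require Import all_boot all_algebra.
From mathcomp Require Import boolp classical_sets functions cardinality.
Set Implicit Arguments. Unset Strict Implicit. Unset Printing Implicit Defensive.
Import GRing.Theory.
Local Open Scope ring_scope.
Local Open Scope classical_set_scope.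

Lemma card_le_inj_image (T U : Type) (A : set T) (B : set U) (f : T -> U) :
  {in A &, injective f} -> f @` A `<=` B -> (A #<= B)%card.
Proof.
move=> finj fAB; apply: card_le_trans (subset_card_le fAB).
by have /card_eqPle[] := inj_card_eq finj.
Qed.

Section ZeroDivisorGraph.
Variable R : comNzRingType.
Implicit Types x y z : R.

Lemma ann_eclass x y : eclass x = eclass y -> ann x = ann y.
Proof. by move=> e; have /[!inE] : x \in eclass y by rewrite -e inE. Qed.

Lemma eclass_neq x y : ann x <> ann y -> eclass x <> eclass y.
Proof. by move=> nxy /ann_eclass. Qed.

Lemma nbhdE_eclass_mul x y :
  Zstar x -> eclass x <> eclass y -> x * y = 0 -> nbhdE y (eclass x).
Proof. by move=> Zx nxy xy0; exists x. Qed.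

Lemma nbhdE_notin x : ~ nbhdE x (eclass x).
Proof. by case=> z [_ [-> [nzx _]]]. Qed.

Lemma nbhdE_eclass_ann x y : nbhdE x (eclass y) -> x * y = 0.
Proof.
case=> z [_ [/ann_eclass e [_ zx0]]].
have : ann z x by rewrite /ann /= mulrC.
by rewrite -e.
Qed.

Lemma nbhdE_ann_subset x y C :
  ann x `<=` ann y -> nbhdE x C -> C <> eclass y -> nbhdE y C.
Proof.
move=> sxy [z [Zz [-> [_ zx0]]]] nzy.
by exists z; split=> //; split=> //; split=> //; apply: sxy.
Qed.

End ZeroDivisorGraph.

Theorem proposition2p1 (R : comNzRingType) (x y : R) :
  noetherian R -> Zstar x -> Zstar y ->
  ann x <> [set 0] -> ann x `<` ann y ->
  (nbhdE x #<= nbhdE y)%card.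
Proof.
move=> _ Zx _ _ [sxy nxy].
have nexy : eclass x <> eclass y by apply: eclass_neq => exy; apply: nxy; rewrite exy.
pose swap C := if `[< C = eclass y >] then eclass x else C.
apply: (@card_le_inj_image _ _ _ _ swap).
  move=> C D /[!inE] NC ND; rewrite /swap.
  case: asboolP => [->|nCy]; case: asboolP => [->|nDy] //.
  - by move=> eD; rewrite -eD in ND; case: (nbhdE_notin ND).
  - by move=> eC; rewrite eC in NC; case: (nbhdE_notin NC).
move=> _ [C NC <-]; rewrite /swap; case: asboolP => [eCy|nCy].
  by apply: nbhdE_eclass_mul; rewrite // nbhdE_eclass_ann // -eCy.
exact: nbhdE_ann_subset NC nCy.
Qed.
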